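(* Let $(X,P)$ be an $(N,s)$-pre-tiling space, let $Y$ be a metric space, and let $f:X\to Y$ be a surjective $(L,\gamma)$-homogeneously bi-Hölder map. Define the covering structure $Q$ on $Y$ by $\mathrm{dom}(Q)=\mathrm{dom}(P)$ and $Q_n=\{f(A):A\in P_n\}$. Then $(Y,Q)$ is an $(N,s^\gamma)$-pre-tiling space.
   Context: For $L\ge1$, $\gamma>0$, a map $f:X\to Y$ is $(L,\gamma)$-homogeneously bi-Hölder if $L^{-1}d_X(x,y)^\gamma\le d_Y(f(x),f(y))\le Ld_X(x,y)^\gamma$ for all $x,y\in X$. $\mathbb{N}=\{0,1,\dots\}$. A covering structure on a set $Z$ is a map $P$ from $\mathbb{N}$ or $\mathbb{Z}$ to coverings of $Z$; $P_n$ its value, $\mathrm{dom}(P)$ its domain; $[T]_k=\{A\in P_{n+k}:A\subset T\}$ for $T\in P_n$. $(Z,P)$ is an $N$-tiling set if (S1) for $n<m$ in $\mathrm{dom}(P)$, $A\in P_n$: $\mathrm{card}[A]_{m-n}=N^{m-n}$ and $A=\bigcup[A]_{m-n}$; (S2) for $A,B\in P_n$ there exist $m$ and $C\in P_m$ with $A\cup B\subset C$. For $Z$ a metric space ($\delta$ = diameter, $U(p,r)$ open ball), $s\in(0,\infty)$, an $N$-tiling set is an $(N,s)$-pre-tiling space if (T1) there are $D_1,D_2>0$ with $D_1\le\delta(A)/s^n\le D_2$ for all $n\in\mathrm{dom}(P)$, $A\in P_n$; (T2) there is $E>0$ such that every $A\in P_n$ contains some $p_A$ with $U(p_A,Es^n)\subset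 A$. *)

From HB Require Import structures.
From mathcomp Require Import all_boot all_order all_algebra.
From mathcomp Require Import all_classical all_reals all_analysis.
Set Implicit Arguments. Unset Strict Implicit. Unset Printing Implicit Defensive.
Import Order.TTheory GRing.Theory Num.Theory.
Local Open Scope classical_set_scope.
Local Open Scope ring_scope.

Section Tiling.
Variable R : realType.

Definition is_metric (T : Type) (d : T -> T -> R) : Prop :=
  (forall x y, 0 <= d x y) /\ (forall x y, d x y = 0 <-> x = y) /\
  (forall x y, d x y = d y x) /\ (forall x y z, d x z <= d x y + d y z).

Definition homog_biHolder (X Y : Type) (dX : X -> X -> R) (dY : Y -> Y -> R)
  (L gamma : R) (f : X -> Y) : Prop :=
  forall x y, L^-1 * (dX x y `^ gamma) <= dY (f x) (f y) /\
              dY (f x) (f y) <= L * (dX x y `^ gamma).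

(* Domain of a covering structure: N (isZ = false) or Z (isZ = true). *)
Definition indom (isZ : bool) (n : int) : Prop := isZ \/ (0 <= n).

Definition covering_structure (Z : Type) (isZ : bool) (P : int -> set (set Z)) :=
  forall n, indom isZ n -> \bigcup_(A in P n) A = [set: Z].

Definition subtiles (Z : Type) (P : int -> set (set Z)) (n : int) (k : nat) (T : set Z) :=
  [set A | P (n + k%:Z) A /\ A `<=` T].

Definition tiling_set (Z : Type) (isZ : bool) (P : int -> set (set Z)) (N : nat) :=
  covering_structure isZ P /\
  (forall (n m : int), indom isZ n -> indom isZ m -> n < m ->
     forall A, P n A ->
       ((subtiles P n `|m - n|%N A) #= `I_(N ^ `|m - n|%N))%card /\
       A = \bigcup_(B in subtiles P n `|m - n|%N A) B) /\
  (forall n, indom isZ n -> forall A B, P n A -> P n B ->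
     exists m, indom isZ m /\ exists C, P m C /\ A `|` B `<=` C).

Definition diam (Z : Type) (d : Z -> Z -> R) (A : set Z) : \bar R :=
  ereal_sup [set (d x y)%:E | x in A & y in A].

Definition oball (Z : Type) (d : Z -> Z -> R) (p : Z) (r : R) : set Z :=
  [set y | d p y < r].

(* (T1) written as D1 * s^n <= diam A <= D2 * s^n, equivalent to
   D1 <= diam A / s^n <= D2 since s^n > 0 (and forces diam A finite). *)
Definition pre_tiling_space (Z : Type) (d : Z -> Z -> R) (isZ : bool)
  (P : int -> set (set Z)) (N : nat) (s : R) : Prop :=
  is_metric d /\ 0 < s /\ tiling_set isZ P N /\
  (exists D1 D2 : R, 0 < D1 /\ 0 < D2 /\
     forall n, indom isZ n -> forall A, P n A ->
       ((D1 * s ^ n)%:E <= diam d A /\ diam d A <= (D2 * s ^ n)%:E)%E) /\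
  (exists E : R, 0 < E /\
     forall n, indom isZ n -> forall A, P n A ->
       exists2 p, A p & oball d p (E * s ^ n) `<=` A).

End Tiling.

From mathcomp Require Import all_boot all_order all_algebra.
From mathcomp Require Import all_classical all_reals all_analysis.
Import Order.TTheory GRing.Theory Num.Theory.
Local Open Scope classical_set_scope.
Local Open Scope ring_scope.

(* A bi-Hölder map is a bijection, so it transports the combinatorics of the
   tiles (S1), (S2) unchanged.  Metrically, distances at scale s^n in X become
   distances comparable, up to the factor L, to (s^n)^gamma = (s^gamma)^n in Y;
   this rescales the constants of (T1) and (T2) to L^-1 D1^gamma, L D2^gamma and
   L^-1 E^gamma. *)

Set Implicit Arguments. Unset Strict Implicit.

Section image_injective.
Context {aT rT : Type} (f : aT -> rT).
Hypothesis f_inj : injective f.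

Lemma inj_sub_imageP (A B : set aT) : f @` A `<=` f @` B <-> A `<=` B.
Proof.
split=> [AB x Ax|/image_subset//].
by have := AB (f x) (imageP f Ax); rewrite image_inj.
Qed.

Lemma inj_image_set : injective (fun A : set aT => f @` A).
Proof.
move=> A B eAB; apply/seteqP; split; apply/inj_sub_imageP; by rewrite eAB.
Qed.

End image_injective.

Definition image_covering (X Y : Type) (f : X -> Y) (P : int -> set (set X)) :
    int -> set (set Y) :=
  fun n => [set f @` A | A in P n].

Section image_covering.
Context {X Y : Type} (f : X -> Y) (P : int -> set (set X)).
Hypothesis f_inj : injective f.

Lemma subtiles_image_covering n k (A : set X) :
  subtiles (image_covering f P) n k (f @` A) =
  (fun B => f @` B) @` subtiles P n k A.
Proof.
apply/seteqP; split=> [_ [[B PB <-] /(inj_sub_imageP f_inj) BA]|].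
  by exists B.
by move=> _ [B [PB BA] <-]; split; [exists B | apply: image_subset].
Qed.

Lemma image_covering_tiling_set isZ N :
  (forall y : Y, exists x : X, f x = y) ->
  tiling_set isZ P N -> tiling_set isZ (image_covering f P) N.
Proof.
move=> f_surj [covP [S1 S2]]; split; [|split].
- move=> n n_dom; apply/seteqP; split=> // y _.
  have [x <-] := f_surj y.
  have [A PA Ax] : (\bigcup_(A in P n) A) x by rewrite covP.
  by exists (f @` A); [exists A | exists x].
- move=> n m n_dom m_dom lt_nm _ [A PA <-].
  have [cardA coverA] := S1 n m n_dom m_dom lt_nm A PA.
  rewrite subtiles_image_covering; split.
    by rewrite (card_eql (inj_card_eq _)) //; exact: in2W (inj_image_set f_inj).
  by rewrite [in LHS]coverA image_bigcup bigcup_image.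
- move=> n n_dom _ _ [A PA <-] [B PB <-].
  have [m [m_dom [C [PC ABC]]]] := S2 n n_dom A B PA PB.
  exists m; split=> //; exists (f @` C); split; first by exists C.
  by rewrite -image_setU; exact: image_subset.
Qed.

End image_covering.

Section diameter.
Context {R : realType} {Z : Type} (d : Z -> Z -> R).

Lemma dist_le_diam (A : set Z) x y : A x -> A y -> ((d x y)%:E <= diam d A)%E.
Proof. by move=> Ax Ay; apply: ereal_sup_ubound; exists x => //; exists y. Qed.

Lemma diam_le (A : set Z) (M : R) :
  (forall x y, A x -> A y -> d x y <= M) -> (diam d A <= M%:E)%E.
Proof.
by move=> dM; apply: ge_ereal_sup => _ [x Ax [y Ay <-]]; rewrite lee_fin dM.
Qed.

Lemma diam_gt_dist (A : set Z) (M : R) :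
  (M%:E < diam d A)%E -> exists x y, [/\ A x, A y & M < d x y].
Proof.
by move=> /ereal_sup_gt [_ [x Ax [y Ay <-]]]; rewrite lte_fin => h; exists x, y.
Qed.

End diameter.

Lemma powRM_exprz {R : realType} (c s gamma : R) (n : int) :
  0 <= c -> 0 < s -> (c * s ^ n) `^ gamma = c `^ gamma * (s `^ gamma) ^ n.
Proof.
move=> c_ge0 s_gt0; rewrite powRM // ?exprz_ge0 ?ltW //.
congr (_ * _); apply/esym.
by rewrite -powR_intmul ?powR_ge0 // -powRrM mulrC powRrM powR_intmul ?ltW.
Qed.

Section homog_biHolder.
Context {R : realType} {X Y : Type} (dX : X -> X -> R) (dY : Y -> Y -> R).
Context (L gamma : R) (f : X -> Y).
Hypotheses (mX : is_metric dX) (mY : is_metric dY).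
Hypotheses (L_gt0 : 0 < L) (gamma_gt0 : 0 < gamma).
Hypothesis f_biHolder : homog_biHolder dX dY L gamma f.

Let dX_ge0 x y : 0 <= dX x y. Proof. by case: mX. Qed.

Let le_dist_powR (c : R) x y :
  0 <= c -> c <= dX x y -> L^-1 * c `^ gamma <= dY (f x) (f y).
Proof.
move=> c_ge0 le_c; apply: le_trans (proj1 (f_biHolder x y)).
rewrite ler_pM2l ?invr_gt0 //.
by apply: ge0_ler_powR; rewrite ?nnegrE ?(ltW gamma_gt0).
Qed.

Lemma homog_biHolder_inj : injective f.
Proof.
move=> x y fxy; apply/(proj1 (proj2 mX)); apply: (powR_eq0_eq0 (p := gamma)).
apply/le_anti; rewrite powR_ge0 andbT.
have := proj1 (f_biHolder x y); rewrite fxy (proj2 (proj1 (proj2 mY) _ _)) //.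
by rewrite pmulr_rle0 // invr_gt0.
Qed.

Lemma diam_image_le (A : set X) (c : R) :
  0 <= c -> (diam dX A <= c%:E)%E ->
  (diam dY (f @` A) <= (L * c `^ gamma)%:E)%E.
Proof.
move=> c_ge0 diamA; apply: diam_le => _ _ [x Ax <-] [y Ay <-].
apply: le_trans (proj2 (f_biHolder x y)) _; rewrite ler_pM2l //.
apply: ge0_ler_powR; rewrite ?nnegrE ?(ltW gamma_gt0) ?dX_ge0 //.
by rewrite -lee_fin (le_trans _ diamA) ?dist_le_diam.
Qed.

Lemma diam_image_ge (A : set X) (c : R) :
  0 <= c -> (c%:E < diam dX A)%E ->
  ((L^-1 * c `^ gamma)%:E <= diam dY (f @` A))%E.
Proof.
move=> c_ge0 /diam_gt_dist [x [y [Ax Ay /ltW lt_c]]].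
apply: le_trans (dist_le_diam _ (imageP f Ax) (imageP f Ay)).
by rewrite lee_fin le_dist_powR.
Qed.

Lemma oball_image_sub (A : set X) (p : X) (r : R) :
  (forall y : Y, exists x : X, f x = y) -> 0 <= r ->
  oball dX p r `<=` A -> oball dY (f p) (L^-1 * r `^ gamma) `<=` f @` A.
Proof.
move=> f_surj r_ge0 ballA y; have [x <-] := f_surj y.
rewrite /oball /= => lt_r; exists x => //; apply: ballA; rewrite /oball /=.
by rewrite ltNge; apply: contraTN lt_r => /(le_dist_powR r_ge0); rewrite leNgt.
Qed.

End homog_biHolder.

Theorem proposition3p11 (R : realType) (X Y : Type)
  (dX : X -> X -> R) (dY : Y -> Y -> R) (isZ : bool)
  (P : int -> set (set X)) (N : nat) (s L gamma : R) (f : X -> Y) :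
  pre_tiling_space dX isZ P N s ->
  is_metric dY ->
  1 <= L -> 0 < gamma ->
  homog_biHolder dX dY L gamma f ->
  (forall y : Y, exists x : X, f x = y) ->
  pre_tiling_space dY isZ (fun n => [set f @` A | A in P n]) N (s `^ gamma).
Proof.
move=> [mX [s_gt0 [tilP [[D1 [D2 [D1_gt0 [D2_gt0 T1]]]] [E [E_gt0 T2]]]]]].
move=> mY L_ge1 gamma_gt0 f_biHolder f_surj.
have L_gt0 : 0 < L by apply: lt_le_trans L_ge1.
have f_inj := homog_biHolder_inj mX mY L_gt0 f_biHolder.
have sn_gt0 n : 0 < s ^ n := exprz_gt0 n s_gt0.
have [D1_ge0 D2_ge0 E_ge0] := And3 (ltW D1_gt0) (ltW D2_gt0) (ltW E_gt0).
do 2 (split=> //); first exact: powR_gt0.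
split; first exact: image_covering_tiling_set.
split.
  (* The diameter is a supremum that need not be attained, hence D1 / 2. *)
  exists (L^-1 * (D1 / 2) `^ gamma), (L * D2 `^ gamma).
  rewrite !mulr_gt0 ?invr_gt0 ?powR_gt0 ?divr_gt0 //; do 2 split=> //.
  move=> n n_dom _ [A PA <-]; have [lowA upA] := T1 n n_dom A PA.
  rewrite -!mulrA -!powRM_exprz ?divr_ge0 //; split.
    apply: (diam_image_ge mX L_gt0 gamma_gt0 f_biHolder).
      by rewrite mulr_ge0 ?divr_ge0 ?ltW.
    apply: lt_le_trans lowA; rewrite lte_fin ltr_pM2r //.
    by rewrite gtr_pMr // invf_lt1 // ltr1n.
  apply: (diam_image_le mX L_gt0 gamma_gt0 f_biHolder) upA.
  by rewrite mulr_ge0 ?ltW.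
exists (L^-1 * E `^ gamma).
split; first by rewrite mulr_gt0 ?invr_gt0 ?powR_gt0.
move=> n n_dom _ [A PA <-]; have [p Ap ballA] := T2 n n_dom A PA.
exists (f p); first exact: imageP.
rewrite -mulrA -powRM_exprz //.
apply: (oball_image_sub mX L_gt0 gamma_gt0 f_biHolder f_surj _ ballA).
by rewrite mulr_ge0 ?ltW.
Qed.
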